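(* There is a constant $C>0$ depending only on $\theta_*$ (and the fixed model $w$) such that for every $1$-Lipschitz function $\ell$ on $[0,\theta_*]$ with $\ell(0)=0$ and every integer $k\ge1$, there exist real coefficients $b_0,\dots,b_k$ such that $\hat\ell(\theta)=\sum_{x=0}^k b_x f(x\mid\theta)$ satisfies $$\max_{\theta\in[0,\theta_*]}|\ell(\theta)-\hat\ell(\theta)|\le C/k\quad\text{and}\quad \max_{0\le x\le k}|b_x|\le C^k\max_{1\le x\le k}\frac1{w(x)}.$$
   Context: Discrete exponential family model: fix $\theta_*>0$ and $w(x)>0$, $x=0,1,2,\dots$, such that $\sum_{x\ge0}w(x)\theta^x$ has radius of convergence $\theta_r\in(0,\infty]$ with $\theta_*<\theta_r$; $g(\theta)=\big(\sum_{x\ge 0}w(x)\theta^x\big)^{-1}$ and $f(x\mid\theta)=g(\theta)w(x)\theta^x$ for $x\in\{0,1,\dots\}$, $\theta\in[0,\theta_*]$. *)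

From Stdlib Require Import Reals List.
From Coquelicot Require Import Coquelicot.
Open Scope R_scope.

Definition Zfun (w : nat -> R) (theta : R) : R :=
  Series (fun x => w x * theta ^ x).

Definition gfun (w : nat -> R) (theta : R) : R := / Zfun w theta.

Definition fmass (w : nat -> R) (x : nat) (theta : R) : R :=
  gfun w theta * w x * theta ^ x.

Definition maxinv (w : nat -> R) (k : nat) : R :=
  fold_right Rmax 0 (map (fun x => / w x) (seq 1 k)).

(* Let Z = 1/g be the partition function and h := l Z. As theta_star lies inside the
   disc of convergence, Z is bounded and Lipschitz on [0, theta_star], hence so is h.
   Substituting theta = theta_star (1 + cos t) / 2 turns h into an even function of t,
   which a discretised Jackson operator approximates within O(1/k) by a cosine
   polynomial of degree k whose coefficients are averages of values of h. Since
   cos (d t) = T_d (2 theta / theta_star - 1), this is a polynomial sum_x c_x theta^x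
   with |c_x| <= C^k. Finally sum_x (c_x / w x) f(x | theta) = g(theta) sum_x c_x theta^x
   approximates g h = l, because g <= 1 / w 0. *)

From Stdlib Require Import Reals Lra Lia Psatz List.
From Coquelicot Require Import Coquelicot.
Open Scope R_scope.

(** * Finite sums and polynomials with bounded coefficients *)

Lemma sum_f_R0_swap (F : nat -> nat -> R) (n M : nat) :
  sum_f_R0 (fun j => sum_f_R0 (fun m => F j m) n) M =
  sum_f_R0 (fun m => sum_f_R0 (fun j => F j m) M) n.
Proof.
  induction M as [|M IH]; simpl.
  - apply sum_eq; intros; reflexivity.
  - rewrite IH, <- plus_sum. apply sum_eq; intros; reflexivity.
Qed.

Lemma sum_f_R0_mul_r (f : nat -> R) (n : nat) (x : R) :
  sum_f_R0 f n * x = sum_f_R0 (fun i => f i * x) n.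
Proof. rewrite Rmult_comm, scal_sum. reflexivity. Qed.

Lemma sum_f_R0_mul_l (f : nat -> R) (n : nat) (x : R) :
  x * sum_f_R0 f n = sum_f_R0 (fun i => x * f i) n.
Proof. rewrite scal_sum. apply sum_eq; intros; ring. Qed.

Lemma sum_f_R0_mul (x y : nat -> R) (n n' : nat) :
  sum_f_R0 x n * sum_f_R0 y n' =
  sum_f_R0 (fun m => sum_f_R0 (fun m' => x m * y m') n') n.
Proof. rewrite sum_f_R0_mul_r. apply sum_eq; intros. apply sum_f_R0_mul_l. Qed.

Lemma sum_f_R0_kronecker (f : nat -> R) (p n : nat) (c : R) :
  sum_f_R0 (fun m => f m * (if Nat.eqb p m then c else 0)) n =
  if Nat.leb p n then f p * c else 0.
Proof.
  induction n as [|n IH]; simpl.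
  - destruct p; simpl; ring.
  - rewrite IH. destruct (Nat.eqb_spec p (S n)) as [->|Hne].
    + rewrite (proj2 (Nat.leb_gt (S n) n)), Nat.leb_refl by lia. ring.
    + destruct (Nat.leb_spec p n); rewrite ?(proj2 (Nat.leb_le p (S n))),
        ?(proj2 (Nat.leb_gt p (S n))) by lia; ring.
Qed.

Definition bounded_poly (d : nat) (B : R) (f : R -> R) : Prop :=
  exists c : nat -> R, (forall i, Rabs (c i) <= B) /\
    forall x, f x = sum_f_R0 (fun i => c i * x ^ i) d.

Lemma bounded_poly_ext d B f g :
  (forall x, f x = g x) -> bounded_poly d B f -> bounded_poly d B g.
Proof. intros E [c [Hc Hf]]. exists c; split; auto. intros; rewrite <- E; auto. Qed.

Lemma sum_pow_pad (c : nat -> R) (d m : nat) (x : R) :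
  sum_f_R0 (fun i => (if Nat.leb i d then c i else 0) * x ^ i) (d + m) =
  sum_f_R0 (fun i => c i * x ^ i) d.
Proof.
  induction m as [|m IH].
  - rewrite Nat.add_0_r. apply sum_eq; intros. rewrite (proj2 (Nat.leb_le i d)) by lia. ring.
  - rewrite Nat.add_succ_r. cbn [sum_f_R0]. rewrite IH, (proj2 (Nat.leb_gt _ d)) by lia. ring.
Qed.

Lemma bounded_poly_weaken d d' B B' f :
  (d <= d')%nat -> B <= B' -> bounded_poly d B f -> bounded_poly d' B' f.
Proof.
  intros Hd HB [c [Hc Hf]].
  exists (fun i => if Nat.leb i d then c i else 0). split.
  - intros i. specialize (Hc i). pose proof (Rabs_pos (c i)).
    destruct (Nat.leb i d); rewrite ?Rabs_R0; lra.
  - intros x. replace d' with (d + (d' - d))%nat by lia. rewrite sum_pow_pad. auto.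
Qed.

Lemma bounded_poly_add d B1 B2 f g :
  bounded_poly d B1 f -> bounded_poly d B2 g ->
  bounded_poly d (B1 + B2) (fun x => f x + g x).
Proof.
  intros [c1 [H1 Hf]] [c2 [H2 Hg]]. exists (fun i => c1 i + c2 i). split.
  - intros i. eapply Rle_trans; [apply Rabs_triang|]. specialize (H1 i); specialize (H2 i); lra.
  - intros x. rewrite Hf, Hg, <- plus_sum. apply sum_eq; intros; ring.
Qed.

Lemma bounded_poly_scal d B a f :
  bounded_poly d B f -> bounded_poly d (Rabs a * B) (fun x => a * f x).
Proof.
  intros [c [Hc Hf]]. exists (fun i => a * c i). split.
  - intros i. rewrite Rabs_mult. apply Rmult_le_compat_l; [apply Rabs_pos|auto].
  - intros x. rewrite Hf, sum_f_R0_mul_l. apply sum_eq; intros; ring.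
Qed.

Lemma bounded_poly_mulx d B f :
  bounded_poly d B f -> bounded_poly (S d) B (fun x => x * f x).
Proof.
  intros [c [Hc Hf]]. exists (fun i => match i with O => 0 | S j => c j end). split.
  - intros [|i]; auto. rewrite Rabs_R0. eapply Rle_trans; [apply Rabs_pos|apply (Hc 0%nat)].
  - intros x. rewrite decomp_sum by lia. simpl. rewrite Hf, sum_f_R0_mul_l.
    ring_simplify. apply sum_eq; intros; simpl; ring.
Qed.

Lemma bounded_poly_const a : bounded_poly 0 (Rabs a) (fun _ => a).
Proof. exists (fun _ => a). split; [intros; lra | intros; simpl; ring]. Qed.

Lemma bounded_poly_sum d (B : nat -> R) (f : nat -> R -> R) (J : nat) :
  (forall j, (j <= J)%nat -> bounded_poly d (B j) (f j)) ->
  bounded_poly d (sum_f_R0 B J) (fun x => sum_f_R0 (fun j => f j x) J).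
Proof.
  induction J as [|J IH]; intros H; simpl.
  - apply H; lia.
  - apply bounded_poly_add; [apply IH; intros; apply H; lia | apply H; lia].
Qed.

(** * Cosine sums over equispaced nodes *)

Lemma sum_cos_arith a b M :
  2 * sin (b / 2) * sum_f_R0 (fun j => cos (a + INR j * b)) M
  = sin (a + INR M * b + b / 2) - sin (a - b / 2).
Proof.
  induction M as [|M IH].
  - simpl. replace (a + 0 * b) with a by ring.
    replace (a + 0 * b + b / 2) with (a + b / 2) by ring.
    rewrite sin_plus, sin_minus. ring.
  - cbn [sum_f_R0]. rewrite Rmult_plus_distr_l, IH, S_INR.
    replace (a + (INR M + 1) * b + b / 2) with ((a + INR M * b + b) + b / 2) by field.
    replace (a + INR M * b + b / 2) with ((a + INR M * b + b) - b / 2) by field.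
    replace (a + (INR M + 1) * b) with (a + INR M * b + b) by field.
    rewrite sin_plus, sin_minus. ring.
Qed.

Lemma sum_cos_roots_of_unity d N a : (0 < d < N)%nat ->
  sum_f_R0 (fun j => cos (a + INR j * (2 * PI * INR d / INR N))) (N - 1) = 0.
Proof.
  intros Hd. set (b := 2 * PI * INR d / INR N).
  assert (HN : 0 < INR N) by (apply lt_0_INR; lia).
  assert (Hdr : 0 < INR d) by (apply lt_0_INR; lia).
  assert (HdN : INR d < INR N) by (apply lt_INR; lia).
  assert (Hsin : sin (b / 2) <> 0).
  { apply Rgt_not_eq, sin_gt_0; unfold b.
    - apply Rdiv_lt_0_compat; [apply Rdiv_lt_0_compat|]; try lra.
      pose proof PI_RGT_0; nra.
    - apply (Rmult_lt_reg_r (INR N)); auto. field_simplify; try lra.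
      apply Rmult_lt_compat_l; [apply PI_RGT_0 | lra]. }
  apply (Rmult_eq_reg_l (2 * sin (b / 2))); [|lra].
  rewrite sum_cos_arith, Rmult_0_r, minus_INR by lia. simpl (INR 1).
  replace (a + (INR N - 1) * b + b / 2) with ((a - b / 2) + 2 * INR d * PI)
    by (unfold b; field; lra).
  rewrite sin_period. ring.
Qed.

(* [n + 2] nodes make the quadrature exact for every frequency up to [n + 1]. *)
Definition node (n j : nat) : R := 2 * PI * INR j / INR (S (S n)).

Lemma sum_cos_nodes n p q s t :
  (p <= S n)%nat -> (q <= S n)%nat -> (s = 1 \/ s = -1) ->
  sum_f_R0 (fun j => cos ((INR p - INR q) * (t + s * node n j))) (S n) =
  if Nat.eqb p q then INR (S (S n)) else 0.
Proof.
  intros Hp Hq Hs. assert (HN : INR (S (S n)) <> 0) by (apply not_0_INR; lia).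
  destruct (Nat.eqb_spec p q) as [->|Hne].
  - rewrite <- (Rmult_1_l (INR (S (S n)))), <- sum_cte.
    apply sum_eq; intros. rewrite Rminus_diag, Rmult_0_l. apply cos_0.
  - replace (S n) with (S (S n) - 1)%nat at 2 by lia.
    destruct (Nat.lt_ge_cases q p) as [Hlt|Hge].
    + rewrite <- (sum_cos_roots_of_unity (p - q) (S (S n)) (s * ((INR p - INR q) * t)))
        by lia.
      apply sum_eq; intros. rewrite minus_INR by lia.
      destruct Hs as [-> | ->]; [|rewrite <- cos_neg]; f_equal; unfold node; field; auto.
    + rewrite <- (sum_cos_roots_of_unity (q - p) (S (S n)) (- s * ((INR p - INR q) * t)))
        by lia.
      apply sum_eq; intros. rewrite minus_INR by lia.
      destruct Hs as [-> | ->]; [rewrite <- cos_neg|]; f_equal; unfold node; field; auto.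
Qed.

(** * A Jackson-type kernel *)

(* [jackson_kernel n u = |sum_m jackson_coef n m e^(i m u)|^2]. *)
Definition jackson_coef (n m : nat) : R := (INR m + 1) * (INR n + 1 - INR m).

Definition jackson_kernel (n : nat) (u : R) : R :=
  sum_f_R0 (fun m => sum_f_R0 (fun m' =>
    jackson_coef n m * jackson_coef n m' * cos ((INR m - INR m') * u)) n) n.

Definition jackson_sum_sq (n : nat) : R :=
  sum_f_R0 (fun m => jackson_coef n m * jackson_coef n m) n.

Definition jackson_sum_lag (n : nat) : R :=
  sum_f_R0 (fun m => jackson_coef n m * jackson_coef n (S m)) n.

Lemma jackson_coef_out n : jackson_coef n (S n) = 0.
Proof. unfold jackson_coef. rewrite S_INR. ring. Qed.

Lemma jackson_kernel_ge0 n u : 0 <= jackson_kernel n u.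
Proof.
  set (C := sum_f_R0 (fun m => jackson_coef n m * cos (INR m * u)) n).
  set (S := sum_f_R0 (fun m => jackson_coef n m * sin (INR m * u)) n).
  replace (jackson_kernel n u) with (C * C + S * S).
  - nra.
  - unfold C, S. rewrite 2 sum_f_R0_mul, <- plus_sum. apply sum_eq; intros.
    rewrite <- plus_sum. apply sum_eq; intros.
    replace ((INR i - INR i0) * u) with (INR i * u - INR i0 * u) by ring.
    rewrite cos_minus. ring.
Qed.

(* Closed forms through the power sums of 1, ..., n + 1; the upper limit [c]
   of the coefficients is kept free to make the induction go through. *)
Lemma sum_jackson_sq_gen c n :
  sum_f_R0 (fun m => ((INR m + 1) * (c + 1 - INR m)) * ((INR m + 1) * (c + 1 - INR m))) n =
  let x := INR n + 1 in
  (c + 2) ^ 2 * (x * (x + 1) * (2 * x + 1) / 6) - 2 * (c + 2) * (x * (x + 1) / 2) ^ 2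
  + x * (x + 1) * (2 * x + 1) * (3 * x ^ 2 + 3 * x - 1) / 30.
Proof.
  induction n as [|n IH]; cbv zeta.
  - simpl. field.
  - cbn [sum_f_R0]. rewrite IH, S_INR. cbv zeta. field.
Qed.

Lemma sum_jackson_lag_gen c n :
  sum_f_R0 (fun m => (INR m + 1) * (c + 1 - INR m) * (2 * INR m + 1 - c)) n =
  let x := INR n + 1 in
  - 2 * (x * (x + 1) / 2) ^ 2 + (3 * (c + 2) - 1) * (x * (x + 1) * (2 * x + 1) / 6)
  + (c + 2) * (1 - (c + 2)) * (x * (x + 1) / 2).
Proof.
  induction n as [|n IH]; cbv zeta.
  - simpl. field.
  - cbn [sum_f_R0]. rewrite IH, S_INR. cbv zeta. field.
Qed.

Lemma jackson_sum_sq_closed n :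
  jackson_sum_sq n = (INR n + 2) * ((INR n + 2) ^ 4 - 1) / 30.
Proof. unfold jackson_sum_sq, jackson_coef. rewrite sum_jackson_sq_gen. cbv zeta. field. Qed.

Lemma jackson_sum_sq_lag_closed n :
  jackson_sum_sq n - jackson_sum_lag n = (INR n + 1) * (INR n + 2) * (INR n + 3) / 6.
Proof.
  unfold jackson_sum_sq, jackson_sum_lag. rewrite <- minus_sum.
  transitivity (sum_f_R0 (fun m =>
    (INR m + 1) * (INR n + 1 - INR m) * (2 * INR m + 1 - INR n)) n).
  - apply sum_eq; intros. unfold jackson_coef. rewrite S_INR. ring.
  - rewrite sum_jackson_lag_gen. cbv zeta. field.
Qed.

Lemma jackson_sum_sq_ge1 n : 1 <= jackson_sum_sq n.
Proof.
  rewrite jackson_sum_sq_closed. pose proof (pos_INR n).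
  assert (H16 : 2 ^ 4 <= (INR n + 2) ^ 4) by (apply pow_incr; lra).
  apply (Rmult_le_reg_r 30); [lra|]. unfold Rdiv. rewrite Rmult_assoc, Rinv_l by lra.
  simpl in H16. nra.
Qed.

Lemma jackson_lag_ratio n :
  (jackson_sum_sq n - jackson_sum_lag n) / jackson_sum_sq n = 5 / ((INR n + 2) ^ 2 + 1).
Proof.
  pose proof (jackson_sum_sq_ge1 n) as H1.
  rewrite jackson_sum_sq_lag_closed. rewrite jackson_sum_sq_closed in *.
  pose proof (pos_INR n). field. split; nra.
Qed.

Lemma jackson_dsum_diag n c : sum_f_R0 (fun m => sum_f_R0 (fun m' =>
  jackson_coef n m * jackson_coef n m' * (if Nat.eqb m m' then c else 0)) n) n =
  c * jackson_sum_sq n.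
Proof.
  unfold jackson_sum_sq. rewrite sum_f_R0_mul_l. apply sum_eq; intros.
  rewrite sum_f_R0_kronecker, (proj2 (Nat.leb_le i n)) by lia. ring.
Qed.

Lemma jackson_dsum_up n c : sum_f_R0 (fun m => sum_f_R0 (fun m' =>
  jackson_coef n m * jackson_coef n m' * (if Nat.eqb (S m) m' then c else 0)) n) n =
  c * jackson_sum_lag n.
Proof.
  unfold jackson_sum_lag. rewrite sum_f_R0_mul_l. apply sum_eq; intros.
  rewrite sum_f_R0_kronecker. destruct (Nat.leb_spec (S i) n); [ring|].
  replace (S i) with (S n) by lia. rewrite jackson_coef_out. ring.
Qed.

Lemma jackson_dsum_down n c : sum_f_R0 (fun m => sum_f_R0 (fun m' =>
  jackson_coef n m * jackson_coef n m' * (if Nat.eqb m (S m') then c else 0)) n) n =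
  c * jackson_sum_lag n.
Proof.
  rewrite sum_f_R0_swap, <- (jackson_dsum_up n c).
  apply sum_eq; intros. apply sum_eq; intros. rewrite Nat.eqb_sym. ring.
Qed.

Lemma jackson_kernel_node_sum n t s : (s = 1 \/ s = -1) ->
  sum_f_R0 (fun j => jackson_kernel n (t + s * node n j)) (S n) =
  INR (S (S n)) * jackson_sum_sq n.
Proof.
  intros Hs. unfold jackson_kernel. rewrite sum_f_R0_swap, <- jackson_dsum_diag.
  apply sum_eq; intros m Hm. rewrite sum_f_R0_swap.
  apply sum_eq; intros m' Hm'.
  rewrite <- sum_f_R0_mul_l, sum_cos_nodes by (auto; lia). reflexivity.
Qed.

Lemma sin_half_sq_mul_cos u e : sin (u / 2) ^ 2 * cos (e * u) =
  cos (e * u) / 2 - cos ((e + 1) * u) / 4 - cos ((e - 1) * u) / 4.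
Proof.
  assert (H : sin (u / 2) ^ 2 = (1 - cos u) / 2).
  { replace u with (2 * (u / 2)) at 2 by field. rewrite cos_2a_sin. field. }
  replace ((e + 1) * u) with (e * u + u) by ring.
  replace ((e - 1) * u) with (e * u - u) by ring.
  rewrite H, cos_plus, cos_minus. field.
Qed.

(* Against the weight sin^2 the kernel only sees [jackson_sum_sq - jackson_sum_lag],
   which is of lower order than [jackson_sum_sq]. *)
Lemma jackson_kernel_sin_node_sum n t s : (s = 1 \/ s = -1) ->
  sum_f_R0 (fun j => sin ((t + s * node n j) / 2) ^ 2 * jackson_kernel n (t + s * node n j))
    (S n) =
  INR (S (S n)) * (jackson_sum_sq n - jackson_sum_lag n) / 2.
Proof.
  intros Hs. set (delta := fun p q : nat => if Nat.eqb p q then INR (S (S n)) else 0).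
  transitivity (sum_f_R0 (fun m => sum_f_R0 (fun m' =>
    jackson_coef n m * jackson_coef n m' *
    (delta m m' / 2 - delta (S m) m' / 4 - delta m (S m') / 4)) n) n).
  - unfold jackson_kernel.
    transitivity (sum_f_R0 (fun j => sum_f_R0 (fun m => sum_f_R0 (fun m' =>
      jackson_coef n m * jackson_coef n m' * (sin ((t + s * node n j) / 2) ^ 2 *
        cos ((INR m - INR m') * (t + s * node n j)))) n) n) (S n)).
    { apply sum_eq; intros. rewrite sum_f_R0_mul_l. apply sum_eq; intros.
      rewrite sum_f_R0_mul_l. apply sum_eq; intros. ring. }
    rewrite sum_f_R0_swap. apply sum_eq; intros m Hm.
    rewrite sum_f_R0_swap. apply sum_eq; intros m' Hm'.
    rewrite <- sum_f_R0_mul_l. f_equal. unfold delta.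
    rewrite <- !sum_cos_nodes with (t := t) (s := s) by (auto; lia).
    unfold Rdiv. rewrite 3 sum_f_R0_mul_r, <- 2 minus_sum. apply sum_eq; intros.
    rewrite 2 S_INR.
    replace (INR m + 1 - INR m') with (INR m - INR m' + 1) by ring.
    replace (INR m - (INR m' + 1)) with (INR m - INR m' - 1) by ring.
    pose proof (sin_half_sq_mul_cos (t + s * node n i) (INR m - INR m')) as E.
    unfold Rdiv in E. exact E.
  - replace (INR (S (S n)) * (jackson_sum_sq n - jackson_sum_lag n) / 2) with
      (INR (S (S n)) * jackson_sum_sq n / 2 - INR (S (S n)) * jackson_sum_lag n / 4
       - INR (S (S n)) * jackson_sum_lag n / 4) by field.
    rewrite <- jackson_dsum_diag, <- (jackson_dsum_up n (INR (S (S n)))) at 1.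
    rewrite <- jackson_dsum_down.
    unfold Rdiv. rewrite !sum_f_R0_mul_r, <- !minus_sum. apply sum_eq; intros.
    rewrite !sum_f_R0_mul_r, <- !minus_sum. apply sum_eq; intros. unfold delta. ring.
Qed.

(* Averaging over [t - node] and [t + node] makes it a cosine polynomial in [t]. *)
Definition jackson_op (n : nat) (g : R -> R) (t : R) : R :=
  / (INR (S (S n)) * jackson_sum_sq n) *
  sum_f_R0 (fun j => g (node n j) *
    ((jackson_kernel n (t - node n j) + jackson_kernel n (t + node n j)) / 2)) (S n).

Lemma jackson_kernel_pm_node_sum n t :
  sum_f_R0 (fun j => jackson_kernel n (t - node n j) + jackson_kernel n (t + node n j)) (S n)
  = 2 * (INR (S (S n)) * jackson_sum_sq n).
Proof.
  transitivity (sum_f_R0 (fun j => jackson_kernel n (t + -1 * node n j)) (S n)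
              + sum_f_R0 (fun j => jackson_kernel n (t + 1 * node n j)) (S n)).
  - rewrite <- plus_sum. apply sum_eq; intros. f_equal; f_equal; ring.
  - rewrite !jackson_kernel_node_sum by lra. ring.
Qed.

Lemma jackson_kernel_pm_sin_node_sum n t :
  sum_f_R0 (fun j => sin ((t - node n j) / 2) ^ 2 * jackson_kernel n (t - node n j)
                   + sin ((t + node n j) / 2) ^ 2 * jackson_kernel n (t + node n j)) (S n)
  = INR (S (S n)) * (jackson_sum_sq n - jackson_sum_lag n).
Proof.
  transitivity (sum_f_R0 (fun j => sin ((t + -1 * node n j) / 2) ^ 2 *
                                   jackson_kernel n (t + -1 * node n j)) (S n)
              + sum_f_R0 (fun j => sin ((t + 1 * node n j) / 2) ^ 2 *
                                   jackson_kernel n (t + 1 * node n j)) (S n)).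
  - rewrite <- plus_sum. apply sum_eq; intros.
    replace (t + -1 * node n i) with (t - node n i) by ring.
    rewrite Rmult_1_l. reflexivity.
  - rewrite !jackson_kernel_sin_node_sum by lra. field.
Qed.

Lemma jackson_op_sub n g t : g t - jackson_op n g t =
  / (INR (S (S n)) * jackson_sum_sq n) * sum_f_R0 (fun j => (g t - g (node n j)) *
    ((jackson_kernel n (t - node n j) + jackson_kernel n (t + node n j)) / 2)) (S n).
Proof.
  pose proof (jackson_sum_sq_ge1 n). assert (0 < INR (S (S n))) by (apply lt_0_INR; lia).
  assert (Hw : sum_f_R0 (fun j =>
      (jackson_kernel n (t - node n j) + jackson_kernel n (t + node n j)) / 2) (S n)
    = INR (S (S n)) * jackson_sum_sq n).
  { unfold Rdiv. rewrite <- sum_f_R0_mul_r, jackson_kernel_pm_node_sum. field. }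
  transitivity (/ (INR (S (S n)) * jackson_sum_sq n) * (g t * sum_f_R0 (fun j =>
      (jackson_kernel n (t - node n j) + jackson_kernel n (t + node n j)) / 2) (S n)
    - sum_f_R0 (fun j => g (node n j) *
      ((jackson_kernel n (t - node n j) + jackson_kernel n (t + node n j)) / 2)) (S n))).
  - rewrite Hw. unfold jackson_op. field. nra.
  - rewrite sum_f_R0_mul_l, <- minus_sum. f_equal. apply sum_eq; intros; ring.
Qed.

Lemma Rabs_le_AM_GM y e : 0 < e -> Rabs y <= (e + y ^ 2 / e) / 2.
Proof.
  intros He. replace (y ^ 2) with (Rabs y ^ 2) by (unfold Rabs; destruct Rcase_abs; ring).
  apply (Rmult_le_reg_r (2 * e)); [lra|].
  replace ((e + Rabs y ^ 2 / e) / 2 * (2 * e)) with (e * e + Rabs y ^ 2) by (field; lra).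
  pose proof (pow2_ge_0 (Rabs y - e)). nra.
Qed.

Lemma Rabs_mul_le_AM_GM d s K L e : 0 < e -> 0 <= K -> 0 <= L ->
  Rabs d <= L * Rabs s -> Rabs d * K <= L / 2 * (e * K + / e * (s ^ 2 * K)).
Proof.
  intros He HK HL Hd. pose proof (Rabs_le_AM_GM s e He).
  replace (L / 2 * (e * K + / e * (s ^ 2 * K))) with (L * ((e + s ^ 2 / e) / 2) * K)
    by (field; lra).
  apply Rmult_le_compat_r; auto. eapply Rle_trans; [apply Hd|].
  apply Rmult_le_compat_l; auto.
Qed.

(* With AM-GM at scale [e = 1/n] the error is at most [L/2 (e + (S - T)/(2 e S))],
   and [(S - T)/S = O(1/n^2)]. *)
Lemma jackson_op_err n g L t : (1 <= n)%nat -> 0 <= L ->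
  (forall t s sg, (sg = 1 \/ sg = -1) ->
     Rabs (g t - g s) <= L * Rabs (sin ((t + sg * s) / 2))) ->
  Rabs (g t - jackson_op n g t) <= 2 * L / INR n.
Proof.
  intros Hn HL Hg.
  set (N := INR (S (S n))). set (Sq := jackson_sum_sq n). set (T := jackson_sum_lag n).
  set (e := / INR n).
  assert (Hnr : 1 <= INR n) by (apply (le_INR 1); auto).
  assert (HN : 0 < N) by (apply lt_0_INR; lia).
  assert (HSq : 1 <= Sq) by apply jackson_sum_sq_ge1.
  assert (He : 0 < e) by (apply Rinv_0_lt_compat; lra).
  assert (Hratio : (Sq - T) / Sq * / e / 2 <= 3 * e).
  { unfold Sq, T, e. rewrite jackson_lag_ratio, Rinv_inv.
    apply (Rmult_le_reg_r (2 * INR n * ((INR n + 2) ^ 2 + 1))); [nra|].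
    field_simplify; nra. }
  rewrite jackson_op_sub. fold N Sq.
  rewrite Rabs_mult, Rabs_right by (apply Rle_ge, Rlt_le, Rinv_0_lt_compat; nra).
  eapply Rle_trans.
  { apply Rmult_le_compat_l; [apply Rlt_le, Rinv_0_lt_compat; nra|].
    eapply Rle_trans; [apply sum_f_R0_triangle|].
    apply sum_Rle with (Bn := fun j => L / 4 *
      (e * (jackson_kernel n (t - node n j) + jackson_kernel n (t + node n j))
       + / e * (sin ((t - node n j) / 2) ^ 2 * jackson_kernel n (t - node n j)
              + sin ((t + node n j) / 2) ^ 2 * jackson_kernel n (t + node n j)))).
    intros j _.
    set (Km := jackson_kernel n (t - node n j)). set (Kp := jackson_kernel n (t + node n j)).
    assert (0 <= Km) by apply jackson_kernel_ge0.
    assert (0 <= Kp) by apply jackson_kernel_ge0.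
    assert (Hm : Rabs (g t - g (node n j)) <= L * Rabs (sin ((t - node n j) / 2))).
    { replace (t - node n j) with (t + -1 * node n j) by ring. apply Hg. lra. }
    assert (Hp : Rabs (g t - g (node n j)) <= L * Rabs (sin ((t + node n j) / 2))).
    { rewrite <- (Rmult_1_l (node n j)) at 2. apply Hg. lra. }
    apply (Rabs_mul_le_AM_GM _ _ Km L e) in Hm; auto.
    apply (Rabs_mul_le_AM_GM _ _ Kp L e) in Hp; auto.
    rewrite Rabs_mult, (Rabs_right ((Km + Kp) / 2)) by lra. lra. }
  rewrite <- sum_f_R0_mul_l, plus_sum, <- !sum_f_R0_mul_l, jackson_kernel_pm_node_sum,
    jackson_kernel_pm_sin_node_sum. fold N Sq T.
  replace (/ (N * Sq) * (L / 4 * (e * (2 * (N * Sq)) + / e * (N * (Sq - T)))))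
    with (L / 2 * (e + (Sq - T) / Sq * / e / 2)) by (field; lra).
  replace (2 * L / INR n) with (L / 2 * (e + 3 * e)) by (unfold e; field; lra).
  apply Rmult_le_compat_l; lra.
Qed.

(** * Polynomial approximation of Lipschitz functions *)

Fixpoint cheb (d : nat) (y : R) : R :=
  match d with
  | O => 1
  | S d' =>
    match d' with
    | O => y
    | S d'' => 2 * y * cheb d' y - cheb d'' y
    end
  end.

Lemma cheb_cos d t : cheb d (cos t) = cos (INR d * t).
Proof.
  enough (H : cheb d (cos t) = cos (INR d * t) /\
              cheb (S d) (cos t) = cos (INR (S d) * t)) by apply H.
  induction d as [|d [IH1 IH2]].
  - simpl. rewrite Rmult_0_l, Rmult_1_l, cos_0. auto.
  - split; auto. change (cheb (S (S d)) (cos t))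
      with (2 * cos t * cheb (S d) (cos t) - cheb d (cos t)).
    rewrite IH1, IH2, !S_INR.
    replace ((INR d + 1 + 1) * t) with ((INR d + 1) * t + t) by ring.
    replace (INR d * t) with ((INR d + 1) * t - t) by ring.
    rewrite cos_plus, cos_minus. ring.
Qed.

Lemma cheb_affine_bounded_poly ts d : 0 < ts ->
  bounded_poly d ((4 / ts + 3) ^ d) (fun x => cheb d (2 * x / ts - 1)).
Proof.
  intros Hts. set (K := 4 / ts + 3).
  assert (Hts' : 0 < / ts) by (apply Rinv_0_lt_compat; lra).
  assert (HK : 1 <= K) by (unfold K, Rdiv; lra).
  assert (Hm1 : Rabs (-1) = 1) by (rewrite Rabs_left; lra).
  assert (Hm2 : Rabs (-2) = 2) by (rewrite Rabs_left; lra).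
  assert (H0 : bounded_poly 0 (K ^ 0) (fun x => cheb 0 (2 * x / ts - 1))).
  { apply (bounded_poly_weaken 0 0 (Rabs 1)); [lia | rewrite Rabs_R1; simpl; lra |].
    apply bounded_poly_const. }
  assert (H1 : bounded_poly 1 (K ^ 1) (fun x => cheb 1 (2 * x / ts - 1))).
  { apply (bounded_poly_ext _ _ (fun x => -1 + 2 / ts * (x * 1))); [intros; simpl; field; lra|].
    apply (bounded_poly_weaken 1 1 (Rabs (-1) + Rabs (2 / ts) * Rabs 1)); [lia| |].
    - rewrite Hm1, Rabs_R1, Rabs_right by (apply Rle_ge; unfold Rdiv; lra).
      unfold K, Rdiv. simpl. lra.
    - apply bounded_poly_add.
      + apply (bounded_poly_weaken 0 1 (Rabs (-1))); [lia | lra | apply bounded_poly_const].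
      + apply bounded_poly_scal, bounded_poly_mulx, bounded_poly_const. }
  enough (H : bounded_poly d (K ^ d) (fun x => cheb d (2 * x / ts - 1)) /\
              bounded_poly (S d) (K ^ S d) (fun x => cheb (S d) (2 * x / ts - 1)))
    by apply H.
  induction d as [|d [IH1 IH2]]; [auto|]. split; auto.
  apply (bounded_poly_ext _ _ (fun x =>
    4 / ts * (x * cheb (S d) (2 * x / ts - 1)) + -2 * cheb (S d) (2 * x / ts - 1)
    + -1 * cheb d (2 * x / ts - 1))).
  { intros x. change (cheb (S (S d)) (2 * x / ts - 1)) with
      (2 * (2 * x / ts - 1) * cheb (S d) (2 * x / ts - 1) - cheb d (2 * x / ts - 1)).
    field. lra. }
  apply (bounded_poly_weaken (S (S d)) (S (S d))
    (Rabs (4 / ts) * K ^ S d + Rabs (-2) * K ^ S d + Rabs (-1) * K ^ d)); [lia| |].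
  - rewrite Hm1, Hm2, Rabs_right by (apply Rle_ge; unfold Rdiv; lra).
    assert (0 < K ^ d) by (apply pow_lt; lra).
    simpl. replace (4 / ts) with (K - 3) by (unfold K; ring). nra.
  - apply bounded_poly_add; [apply bounded_poly_add|].
    + apply bounded_poly_scal, bounded_poly_mulx, IH2.
    + apply (bounded_poly_weaken (S d) _ (Rabs (-2) * K ^ S d)); [lia | lra |].
      apply bounded_poly_scal, IH2.
    + apply (bounded_poly_weaken d _ (Rabs (-1) * K ^ d)); [lia | lra |].
      apply bounded_poly_scal, IH1.
Qed.

Definition nat_dist (m m' : nat) : nat := ((m - m') + (m' - m))%nat.

Lemma cos_nat_dist m m' t : cos ((INR m - INR m') * t) = cos (INR (nat_dist m m') * t).
Proof.
  unfold nat_dist. destruct (Nat.le_ge_cases m' m).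
  - replace (m' - m)%nat with 0%nat by lia. rewrite Nat.add_0_r, minus_INR by lia. reflexivity.
  - replace (m - m')%nat with 0%nat by lia. rewrite Nat.add_0_l, minus_INR by lia.
    rewrite <- cos_neg. f_equal. ring.
Qed.

Definition jackson_cheb (n : nat) (g : R -> R) (y : R) : R :=
  / (INR (S (S n)) * jackson_sum_sq n) *
  sum_f_R0 (fun j => sum_f_R0 (fun m => sum_f_R0 (fun m' =>
    g (node n j) * jackson_coef n m * jackson_coef n m' * cos ((INR m - INR m') * node n j)
      * cheb (nat_dist m m') y) n) n) (S n).

Lemma jackson_op_cheb n g t : jackson_op n g t = jackson_cheb n g (cos t).
Proof.
  unfold jackson_op, jackson_cheb. f_equal. apply sum_eq; intros j _.
  unfold jackson_kernel, Rdiv. rewrite <- plus_sum, sum_f_R0_mul_r, sum_f_R0_mul_l.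
  apply sum_eq; intros m _. rewrite <- plus_sum, sum_f_R0_mul_r, sum_f_R0_mul_l.
  apply sum_eq; intros m' _.
  rewrite cheb_cos, <- cos_nat_dist.
  replace ((INR m - INR m') * (t - node n j))
    with ((INR m - INR m') * t - (INR m - INR m') * node n j) by ring.
  replace ((INR m - INR m') * (t + node n j))
    with ((INR m - INR m') * t + (INR m - INR m') * node n j) by ring.
  rewrite cos_minus, cos_plus. field.
Qed.

Lemma jackson_coef_bound n m : (m <= n)%nat -> Rabs (jackson_coef n m) <= (INR n + 1) ^ 2.
Proof.
  intros H. unfold jackson_coef. assert (INR m <= INR n) by (apply le_INR; auto).
  pose proof (pos_INR m).
  rewrite Rabs_right by (apply Rle_ge, Rmult_le_pos; lra).
  simpl. apply Rmult_le_compat; lra.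
Qed.

Lemma jackson_cheb_coef_bound n m m' a G u : (m <= n)%nat -> (m' <= n)%nat ->
  Rabs a <= G -> Rabs (a * jackson_coef n m * jackson_coef n m' * cos u) <= G * (INR n + 1) ^ 4.
Proof.
  intros Hm Hm' Ha. rewrite !Rabs_mult.
  pose proof (jackson_coef_bound n m Hm). pose proof (jackson_coef_bound n m' Hm').
  assert (Rabs (cos u) <= 1) by apply Rabs_le, COS_bound.
  replace (G * (INR n + 1) ^ 4) with (G * (INR n + 1) ^ 2 * (INR n + 1) ^ 2 * 1) by ring.
  repeat (apply Rmult_le_compat; try (repeat apply Rmult_le_pos); auto using Rabs_pos).
Qed.

Lemma jackson_cheb_bounded_poly ts n g G : 0 < ts ->
  (forall j, Rabs (g (node n j)) <= G) ->
  bounded_poly n (G * (INR n + 1) ^ 6 * (4 / ts + 3) ^ n)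
    (fun x => jackson_cheb n g (2 * x / ts - 1)).
Proof.
  intros Hts Hg. set (K := 4 / ts + 3).
  assert (HK : 1 <= K) by (unfold K, Rdiv; pose proof (Rinv_0_lt_compat ts Hts); lra).
  set (N := INR (S (S n))). set (Sq := jackson_sum_sq n).
  assert (HN : 0 < N) by (apply lt_0_INR; lia).
  assert (HSq : 1 <= Sq) by apply jackson_sum_sq_ge1.
  assert (HG : 0 <= G) by (eapply Rle_trans; [apply Rabs_pos | apply (Hg 0%nat)]).
  pose proof (pos_INR n) as Hn.
  set (B := G * (INR n + 1) ^ 4 * K ^ n).
  assert (Hterm : forall j m m', (m <= n)%nat -> (m' <= n)%nat -> bounded_poly n B (fun x =>
    g (node n j) * jackson_coef n m * jackson_coef n m' * cos ((INR m - INR m') * node n j)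
      * cheb (nat_dist m m') (2 * x / ts - 1))).
  { intros j m m' Hm Hm'.
    apply (bounded_poly_weaken (nat_dist m m') n (G * (INR n + 1) ^ 4 * K ^ nat_dist m m'));
      [unfold nat_dist; lia | |].
    - apply Rmult_le_compat_l; [apply Rmult_le_pos; [lra | apply pow_le; lra] |].
      apply Rle_pow; [lra | unfold nat_dist; lia].
    - apply (bounded_poly_weaken (nat_dist m m') _ (Rabs (g (node n j) * jackson_coef n m *
        jackson_coef n m' * cos ((INR m - INR m') * node n j)) * K ^ nat_dist m m')); [lia| |].
      + apply Rmult_le_compat_r; [apply pow_le; lra | apply jackson_cheb_coef_bound; auto].
      + apply bounded_poly_scal, cheb_affine_bounded_poly, Hts. }
  apply (bounded_poly_weaken n n (Rabs (/ (N * Sq)) *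
    sum_f_R0 (fun j => sum_f_R0 (fun m => sum_f_R0 (fun m' => B) n) n) (S n))); [lia | |].
  - rewrite !sum_cte, Rabs_right by (apply Rle_ge, Rlt_le, Rinv_0_lt_compat; nra).
    fold N. rewrite S_INR.
    replace (/ (N * Sq) * (B * (INR n + 1) * (INR n + 1) * N))
      with (/ Sq * (G * (INR n + 1) ^ 6 * K ^ n)) by (unfold B; field; lra).
    assert (0 <= G * (INR n + 1) ^ 6 * K ^ n)
      by (apply Rmult_le_pos; [apply Rmult_le_pos|]; auto; apply pow_le; lra).
    assert (/ Sq <= 1) by (rewrite <- Rinv_1; apply Rinv_le_contravar; lra).
    nra.
  - apply bounded_poly_scal. apply bounded_poly_sum; intros j Hj.
    apply bounded_poly_sum; intros m Hm. apply bounded_poly_sum; intros m' Hm'.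
    apply Hterm; auto.
Qed.

Lemma Rabs_cos_sub_le t s sg : (sg = 1 \/ sg = -1) ->
  Rabs (cos t - cos s) <= 2 * Rabs (sin ((t + sg * s) / 2)).
Proof.
  intros Hsg. rewrite form2, !Rabs_mult.
  replace (Rabs (-2)) with 2 by (rewrite Rabs_left; lra).
  pose proof (Rabs_le _ 1 (SIN_bound ((t - s) / 2))).
  pose proof (Rabs_le _ 1 (SIN_bound ((t + s) / 2))).
  pose proof (Rabs_pos (sin ((t - s) / 2))). pose proof (Rabs_pos (sin ((t + s) / 2))).
  destruct Hsg as [-> | ->].
  - rewrite Rmult_1_l. nra.
  - replace (t + -1 * s) with (t - s) by ring. nra.
Qed.

Lemma cos_param_range ts t : 0 <= ts -> 0 <= ts * (1 + cos t) / 2 <= ts.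
Proof. intros Hts. pose proof (COS_bound t). split; nra. Qed.

Lemma cos_param_onto ts th : 0 < ts -> 0 <= th <= ts ->
  exists t, ts * (1 + cos t) / 2 = th.
Proof.
  intros Hts Hth. exists (acos (2 * th / ts - 1)).
  assert (0 <= th / ts <= 1).
  { split; [apply Rdiv_le_0_compat; lra |].
    apply (Rmult_le_reg_r ts); [lra |]. unfold Rdiv. rewrite Rmult_assoc, Rinv_l; lra. }
  rewrite cos_acos; [field; lra | unfold Rdiv in *; lra].
Qed.

Lemma lipschitz_cos_param ts h L : 0 <= ts -> 0 <= L ->
  (forall a b, 0 <= a <= ts -> 0 <= b <= ts -> Rabs (h a - h b) <= L * Rabs (a - b)) ->
  forall t s sg, (sg = 1 \/ sg = -1) ->
    Rabs (h (ts * (1 + cos t) / 2) - h (ts * (1 + cos s) / 2))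
      <= L * ts * Rabs (sin ((t + sg * s) / 2)).
Proof.
  intros Hts HL Hh t s sg Hsg.
  eapply Rle_trans; [apply Hh; apply cos_param_range; auto|].
  replace (ts * (1 + cos t) / 2 - ts * (1 + cos s) / 2) with (ts / 2 * (cos t - cos s))
    by field.
  rewrite Rabs_mult, (Rabs_right (ts / 2)) by lra.
  pose proof (Rabs_cos_sub_le t s sg Hsg).
  replace (L * ts * Rabs (sin ((t + sg * s) / 2)))
    with (L * (ts / 2 * (2 * Rabs (sin ((t + sg * s) / 2))))) by field.
  apply Rmult_le_compat_l; [lra|]. apply Rmult_le_compat_l; lra.
Qed.

Lemma lipschitz_poly_approx ts h L G k : 0 < ts -> 0 <= L -> (1 <= k)%nat ->
  (forall a b, 0 <= a <= ts -> 0 <= b <= ts -> Rabs (h a - h b) <= L * Rabs (a - b)) ->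
  (forall a, 0 <= a <= ts -> Rabs (h a) <= G) ->
  exists c : nat -> R,
    (forall i, Rabs (c i) <= G * (INR k + 1) ^ 6 * (4 / ts + 3) ^ k) /\
    forall th, 0 <= th <= ts ->
      Rabs (h th - sum_f_R0 (fun i => c i * th ^ i) k) <= 2 * L * ts / INR k.
Proof.
  intros Hts HL Hk Hlip Hbound.
  set (g := fun t => h (ts * (1 + cos t) / 2)).
  destruct (jackson_cheb_bounded_poly ts k g G Hts) as [c [Hc Hpoly]].
  { intros j. apply Hbound, cos_param_range. lra. }
  exists c. split; [exact Hc|]. intros th Hth.
  destruct (cos_param_onto ts th Hts Hth) as [t Ht].
  rewrite <- Hpoly.
  replace (2 * th / ts - 1) with (cos t) by (subst th; field; lra).
  rewrite <- jackson_op_cheb.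
  replace (h th) with (g t) by (unfold g; rewrite Ht; reflexivity).
  replace (2 * L * ts / INR k) with (2 * (L * ts) / INR k) by (unfold Rdiv; ring).
  apply jackson_op_err; auto; [nra|].
  intros. apply lipschitz_cos_param; auto; lra.
Qed.

(** * The partition function *)

Lemma pow_sub_le a b s t x : 0 <= a <= b -> 0 <= s <= a -> 0 <= t <= a ->
  (b - a) * Rabs (s ^ x - t ^ x) <= b ^ x * Rabs (s - t).
Proof.
  intros Hab Hs Ht. induction x as [|x IH].
  - simpl. rewrite Rminus_diag, Rabs_R0. pose proof (Rabs_pos (s - t)). lra.
  - replace (s ^ S x - t ^ S x) with (s * (s ^ x - t ^ x) + t ^ x * (s - t)) by (simpl; ring).
    pose proof (Rabs_pos (s ^ x - t ^ x)). pose proof (Rabs_pos (s - t)).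
    assert (Htx : t ^ x <= b ^ x) by (apply pow_incr; lra).
    assert (0 <= t ^ x) by (apply pow_le; lra).
    assert (Hsplit : Rabs (s * (s ^ x - t ^ x) + t ^ x * (s - t))
      <= s * Rabs (s ^ x - t ^ x) + t ^ x * Rabs (s - t)).
    { eapply Rle_trans; [apply Rabs_triang|]. rewrite 2 Rabs_mult.
      rewrite (Rabs_right s), (Rabs_right (t ^ x)) by lra. lra. }
    assert (s * ((b - a) * Rabs (s ^ x - t ^ x)) <= a * (b ^ x * Rabs (s - t)))
      by (apply Rmult_le_compat; nra).
    assert (t ^ x * Rabs (s - t) <= b ^ x * Rabs (s - t)) by nra.
    simpl. nra.
Qed.

Section PartitionFunction.

Variables (w : nat -> R) (t0 : R).
Hypothesis w_pos : forall x, 0 < w x.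
Hypothesis Z_t0 : ex_series (fun x => w x * t0 ^ x).

Lemma ex_series_Zfun th : 0 <= th <= t0 -> ex_series (fun x => w x * th ^ x).
Proof.
  intros Hth. apply (@ex_series_le R_AbsRing R_CompleteNormedModule) with
    (b := fun x => w x * t0 ^ x); auto.
  intros x. change (norm (w x * th ^ x)) with (Rabs (w x * th ^ x)).
  pose proof (w_pos x). assert (0 <= th ^ x) by (apply pow_le; lra).
  rewrite Rabs_right by (apply Rle_ge, Rmult_le_pos; lra).
  apply Rmult_le_compat_l; [lra | apply pow_incr; lra].
Qed.

Lemma Zfun_ge_w0 th : 0 <= th <= t0 -> w 0%nat <= Zfun w th.
Proof.
  intros Hth. unfold Zfun. rewrite Series_incr_1 by (apply ex_series_Zfun, Hth).
  simpl. rewrite Rmult_1_r.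
  set (b := fun x => w (S x) * (th * th ^ x)).
  assert (Hb : forall x, 0 <= b x).
  { intros x. pose proof (w_pos (S x)). assert (0 <= th ^ x) by (apply pow_le; lra).
    unfold b. apply Rmult_le_pos; [lra | apply Rmult_le_pos; lra]. }
  assert (0 <= Series b).
  { replace 0 with (Series b * 0) by ring. rewrite <- Series_scal_r.
    apply Series_le; [intros x; pose proof (Hb x); lra|].
    apply (ex_series_incr_1 (fun x => w x * th ^ x)), ex_series_Zfun, Hth. }
  fold b. lra.
Qed.

Lemma Zfun_le_t0 th : 0 <= th <= t0 -> Zfun w th <= Zfun w t0.
Proof.
  intros Hth. unfold Zfun. apply Series_le; auto. intros x.
  pose proof (w_pos x). assert (0 <= th ^ x) by (apply pow_le; lra). split.
  - apply Rmult_le_pos; lra.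
  - apply Rmult_le_compat_l; [lra | apply pow_incr; lra].
Qed.

Lemma Zfun_lipschitz ts s t : 0 <= ts < t0 -> 0 <= s <= ts -> 0 <= t <= ts ->
  Rabs (Zfun w s - Zfun w t) <= Zfun w t0 / (t0 - ts) * Rabs (s - t).
Proof.
  intros Hts Hs Ht. set (q := Rabs (s - t) / (t0 - ts)).
  assert (Hterm : forall x, Rabs (w x * s ^ x - w x * t ^ x) <= w x * t0 ^ x * q).
  { intros x. pose proof (w_pos x).
    replace (w x * s ^ x - w x * t ^ x) with (w x * (s ^ x - t ^ x)) by ring.
    rewrite Rabs_mult, Rabs_right, Rmult_assoc by lra.
    apply Rmult_le_compat_l; [lra|]. unfold q.
    apply (Rmult_le_reg_l (t0 - ts)); [lra|].
    replace ((t0 - ts) * (t0 ^ x * (Rabs (s - t) / (t0 - ts)))) with (t0 ^ x * Rabs (s - t))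
      by (field; lra).
    apply pow_sub_le; lra. }
  unfold Zfun. rewrite <- Series_minus by (apply ex_series_Zfun; lra).
  assert (Hq : ex_series (fun x => w x * t0 ^ x * q)) by (apply ex_series_scal_r, Z_t0).
  eapply Rle_trans; [apply Series_Rabs|].
  - apply (@ex_series_le R_AbsRing R_CompleteNormedModule) with
      (b := fun x => w x * t0 ^ x * q); auto.
    intros x. change (norm (Rabs (w x * s ^ x - w x * t ^ x)))
      with (Rabs (Rabs (w x * s ^ x - w x * t ^ x))).
    rewrite Rabs_Rabsolu. apply Hterm.
  - eapply Rle_trans.
    { apply Series_le; [intros x; split; [apply Rabs_pos | apply Hterm] | exact Hq]. }
    rewrite Series_scal_r. unfold q. right. field. lra.
Qed.

End PartitionFunction.

(** * Approximation by the model *)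

Lemma lipschitz_mul (D : R -> Prop) (f g : R -> R) A B Lf Lg :
  (forall a, D a -> Rabs (f a) <= A) -> (forall a, D a -> Rabs (g a) <= B) ->
  (forall a b, D a -> D b -> Rabs (f a - f b) <= Lf * Rabs (a - b)) ->
  (forall a b, D a -> D b -> Rabs (g a - g b) <= Lg * Rabs (a - b)) ->
  forall a b, D a -> D b ->
    Rabs (f a * g a - f b * g b) <= (A * Lg + B * Lf) * Rabs (a - b).
Proof.
  intros Hf Hg Hfl Hgl a b Ha Hb.
  replace (f a * g a - f b * g b) with (f a * (g a - g b) + g b * (f a - f b)) by ring.
  eapply Rle_trans; [apply Rabs_triang|]. rewrite 2 Rabs_mult.
  pose proof (Hf a Ha). pose proof (Hg b Hb). pose proof (Hfl a b Ha Hb).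
  pose proof (Hgl a b Ha Hb).
  pose proof (Rabs_pos (f a)). pose proof (Rabs_pos (g b)).
  pose proof (Rabs_pos (g a - g b)). pose proof (Rabs_pos (f a - f b)).
  assert (Rabs (f a) * Rabs (g a - g b) <= A * (Lg * Rabs (a - b)))
    by (apply Rmult_le_compat; lra).
  assert (Rabs (g b) * Rabs (f a - f b) <= B * (Lf * Rabs (a - b)))
    by (apply Rmult_le_compat; lra).
  lra.
Qed.

Lemma lipschitz_mul_Zfun w t0 ts l : (forall x, 0 < w x) ->
  ex_series (fun x => w x * t0 ^ x) -> 0 <= ts < t0 ->
  (forall s t, 0 <= s <= ts -> 0 <= t <= ts -> Rabs (l s - l t) <= Rabs (s - t)) ->
  l 0 = 0 ->
  (forall a b, 0 <= a <= ts -> 0 <= b <= ts ->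
     Rabs (l a * Zfun w a - l b * Zfun w b)
       <= (ts * (Zfun w t0 / (t0 - ts)) + Zfun w t0) * Rabs (a - b)) /\
  (forall a, 0 <= a <= ts -> Rabs (l a * Zfun w a) <= ts * Zfun w t0).
Proof.
  intros Hw Hex Hts Hl Hl0.
  assert (Hlb : forall a, 0 <= a <= ts -> Rabs (l a) <= ts).
  { intros a Ha. pose proof (Hl a 0 Ha ltac:(lra)) as H.
    rewrite Hl0, !Rminus_0_r, (Rabs_right a) in H by lra. lra. }
  assert (HZb : forall a, 0 <= a <= ts -> Rabs (Zfun w a) <= Zfun w t0).
  { intros a Ha. pose proof (Hw 0%nat).
    pose proof (Zfun_ge_w0 w t0 Hw Hex a ltac:(lra)).
    pose proof (Zfun_le_t0 w t0 Hw Hex a ltac:(lra)).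
    rewrite Rabs_right; lra. }
  split.
  - replace (ts * (Zfun w t0 / (t0 - ts)) + Zfun w t0)
      with (ts * (Zfun w t0 / (t0 - ts)) + Zfun w t0 * 1) by ring.
    apply (lipschitz_mul (fun a => 0 <= a <= ts)); auto.
    + intros a b Ha Hb. rewrite Rmult_1_l. auto.
    + intros a b Ha Hb. apply Zfun_lipschitz; auto.
  - intros a Ha. rewrite Rabs_mult.
    apply Rmult_le_compat; auto using Rabs_pos.
Qed.

(* [sum_x (c x / w x) f(x | th) = g th * sum_x c x th^x] and [g th <= 1 / w 0]. *)
Lemma fmass_combination_approx w l c k th eps :
  (forall x, 0 < w x) -> w 0%nat <= Zfun w th ->
  Rabs (l th * Zfun w th - sum_f_R0 (fun x => c x * th ^ x) k) <= eps ->
  Rabs (l th - sum_f_R0 (fun x => c x / w x * fmass w x th) k) <= eps / w 0%nat.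
Proof.
  intros Hw HZ Happrox. pose proof (Hw 0%nat).
  replace (l th - sum_f_R0 (fun x => c x / w x * fmass w x th) k)
    with (gfun w th * (l th * Zfun w th - sum_f_R0 (fun x => c x * th ^ x) k)).
  - rewrite Rabs_mult, Rabs_right by (apply Rle_ge, Rlt_le, Rinv_0_lt_compat; lra).
    unfold Rdiv. rewrite Rmult_comm.
    apply Rmult_le_compat; auto using Rabs_pos.
    + apply Rlt_le, Rinv_0_lt_compat; lra.
    + apply Rinv_le_contravar; lra.
  - rewrite Rmult_minus_distr_l, sum_f_R0_mul_l. unfold gfun. f_equal.
    + field. lra.
    + apply sum_eq; intros x _. unfold fmass, gfun. field. pose proof (Hw x). lra.
Qed.

Lemma fmass_poly_approx w t0 ts l k : (forall x, 0 < w x) ->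
  ex_series (fun x => w x * t0 ^ x) -> 0 < ts < t0 ->
  (forall s t, 0 <= s <= ts -> 0 <= t <= ts -> Rabs (l s - l t) <= Rabs (s - t)) ->
  l 0 = 0 -> (1 <= k)%nat ->
  exists c : nat -> R,
    (forall x, Rabs (c x) <= ts * Zfun w t0 * (INR k + 1) ^ 6 * (4 / ts + 3) ^ k) /\
    forall th, 0 <= th <= ts ->
      Rabs (l th - sum_f_R0 (fun x => c x / w x * fmass w x th) k)
        <= 2 * (ts * (Zfun w t0 / (t0 - ts)) + Zfun w t0) * ts / INR k / w 0%nat.
Proof.
  intros Hw Hex Hts Hl Hl0 Hk.
  assert (HZ : forall th, 0 <= th <= t0 -> w 0%nat <= Zfun w th)
    by (intros; apply (Zfun_ge_w0 w t0); auto).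
  assert (HL : 0 <= ts * (Zfun w t0 / (t0 - ts)) + Zfun w t0).
  { pose proof (Hw 0%nat). pose proof (HZ t0 ltac:(lra)).
    assert (0 <= Zfun w t0 / (t0 - ts)) by (apply Rdiv_le_0_compat; lra). nra. }
  destruct (lipschitz_mul_Zfun w t0 ts l Hw Hex ltac:(lra) Hl Hl0) as [Hlip Hbound].
  destruct (lipschitz_poly_approx ts (fun a => l a * Zfun w a) _ _ k ltac:(lra) HL Hk
              Hlip Hbound) as [c [Hc Happrox]].
  exists c. split; [exact Hc|]. intros th Hth.
  apply fmass_combination_approx, Happrox; auto. apply HZ. lra.
Qed.

Lemma fold_right_Rmax_ge (l : list R) x : In x l -> x <= fold_right Rmax 0 l.
Proof.
  induction l as [|a l IH]; simpl; [tauto|]. intros [->|H].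
  - apply Rmax_l.
  - eapply Rle_trans; [apply IH; auto | apply Rmax_r].
Qed.

Lemma fold_right_Rmax_ge0 (l : list R) : 0 <= fold_right Rmax 0 l.
Proof. induction l as [|a l IH]; simpl; [lra|]. eapply Rle_trans; [apply IH | apply Rmax_r]. Qed.

Lemma maxinv_ge0 w k : 0 <= maxinv w k.
Proof. apply fold_right_Rmax_ge0. Qed.

(* [maxinv] ignores [x = 0]; the ratio [w 1 / w 0] accounts for it. *)
Lemma inv_w_le_maxinv w k x : (forall x, 0 < w x) -> (1 <= k)%nat -> (x <= k)%nat ->
  / w x <= (1 + w 1%nat / w 0%nat) * maxinv w k.
Proof.
  intros Hw Hk Hx.
  assert (Hge : forall y, (1 <= y <= k)%nat -> / w y <= maxinv w k).
  { intros y Hy. apply fold_right_Rmax_ge, (in_map (fun x => / w x)), in_seq. lia. }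
  pose proof (maxinv_ge0 w k).
  pose proof (Hw 0%nat). pose proof (Hw 1%nat).
  assert (0 <= w 1%nat / w 0%nat) by (apply Rdiv_le_0_compat; lra).
  destruct x as [|x].
  - replace (/ w 0%nat) with (w 1%nat / w 0%nat * / w 1%nat) by (field; lra).
    pose proof (Hge 1%nat ltac:(lia)). nra.
  - pose proof (Hge (S x) ltac:(lia)). nra.
Qed.

Lemma Rabs_div_w_le w k x c B : (forall x, 0 < w x) -> (1 <= k)%nat -> (x <= k)%nat ->
  Rabs c <= B -> Rabs (c / w x) <= B * (1 + w 1%nat / w 0%nat) * maxinv w k.
Proof.
  intros Hw Hk Hx Hc. pose proof (Hw x).
  unfold Rdiv. rewrite Rabs_mult, Rabs_inv, (Rabs_right (w x)) by lra.
  rewrite Rmult_assoc. apply Rmult_le_compat; auto using Rabs_pos, inv_w_le_maxinv.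
  apply Rlt_le, Rinv_0_lt_compat; lra.
Qed.

Lemma INR_succ_le_pow2 k : INR k + 1 <= 2 ^ k.
Proof.
  induction k as [|k IH]; [simpl; lra|]. rewrite S_INR. simpl.
  pose proof (pow_R1_Rle 2 k ltac:(lra)). lra.
Qed.

Lemma coef_bound_le_pow G K r k : 0 <= G -> 1 <= K -> 0 <= r -> (1 <= k)%nat ->
  G * (INR k + 1) ^ 6 * K ^ k * (1 + r) <= (64 * K * (1 + G) * (1 + r)) ^ k.
Proof.
  intros HG HK Hr Hk. rewrite !Rpow_mult_distr.
  assert (H6 : (INR k + 1) ^ 6 <= 64 ^ k).
  { replace (64 ^ k) with ((2 ^ k) ^ 6)
      by (rewrite <- !pow_mult, Nat.mul_comm, pow_mult; f_equal; simpl; ring).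
    apply pow_incr. pose proof (pos_INR k). pose proof (INR_succ_le_pow2 k). lra. }
  assert (Hself : forall y, 1 <= y -> y <= y ^ k).
  { intros y Hy. rewrite <- (pow_1 y) at 1. apply Rle_pow; auto. }
  assert (HGk : G <= (1 + G) ^ k) by (pose proof (Hself (1 + G) ltac:(lra)); lra).
  pose proof (Hself (1 + r) ltac:(lra)) as Hrk.
  assert (0 <= (INR k + 1) ^ 6) by (apply pow_le; pose proof (pos_INR k); lra).
  assert (0 <= K ^ k) by (apply pow_le; lra).
  assert (0 <= 64 ^ k) by (apply pow_le; lra).
  assert (0 <= (1 + G) ^ k) by (apply pow_le; lra).
  assert (G * (INR k + 1) ^ 6 <= (1 + G) ^ k * 64 ^ k) by (apply Rmult_le_compat; lra).
  assert (G * (INR k + 1) ^ 6 * K ^ k <= 64 ^ k * K ^ k * (1 + G) ^ k) by nra.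
  apply Rmult_le_compat; auto; [|lra].
  apply Rmult_le_pos; [apply Rmult_le_pos|]; auto.
Qed.

Theorem lemma5p4 (w : nat -> R) (theta_star : R) :
  0 < theta_star ->
  (forall x, 0 < w x) ->
  (* radius of convergence of sum w(x) theta^x exceeds theta_star *)
  (exists t, theta_star < t /\ ex_series (fun x => w x * t ^ x)) ->
  exists C : R, 0 < C /\
    forall l : R -> R,
      (forall s t, 0 <= s <= theta_star -> 0 <= t <= theta_star ->
         Rabs (l s - l t) <= Rabs (s - t)) ->
      l 0 = 0 ->
      forall k : nat, (1 <= k)%nat ->
        exists b : nat -> R,
          (forall theta, 0 <= theta <= theta_star ->
             Rabs (l theta - sum_f_R0 (fun x => b x * fmass w x theta) k)
               <= C / INR k) /\
          (forall x, (x <= k)%nat -> Rabs (b x) <= C ^ k * maxinv w k).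
Proof.
  intros Hts Hw [t0 [Ht0 Hex]].
  set (Zt := Zfun w t0). set (G := theta_star * Zt). set (K := 4 / theta_star + 3).
  set (r := w 1%nat / w 0%nat). set (C0 := 64 * K * (1 + G) * (1 + r)).
  set (E := 2 * (theta_star * (Zt / (t0 - theta_star)) + Zt) * theta_star / w 0%nat).
  pose proof (Hw 0%nat). pose proof (Hw 1%nat).
  assert (HZt : w 0%nat <= Zt) by (apply (Zfun_ge_w0 w t0); auto; lra).
  assert (HG : 0 <= G) by (unfold G; nra).
  assert (HK : 1 <= K) by (unfold K, Rdiv; pose proof (Rinv_0_lt_compat _ Hts); lra).
  assert (Hr : 0 <= r) by (apply Rdiv_le_0_compat; lra).
  assert (HE : 0 <= E).
  { assert (0 <= Zt / (t0 - theta_star)) by (apply Rdiv_le_0_compat; lra).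
    unfold E. apply Rdiv_le_0_compat; nra. }
  assert (HC0 : 1 <= C0) by (unfold C0; assert (64 <= 64 * K * (1 + G)) by nra; nra).
  exists (C0 + E). split; [lra|]. intros l Hl Hl0 k Hk.
  destruct (fmass_poly_approx w t0 theta_star l k Hw Hex ltac:(lra) Hl Hl0 Hk)
    as [c [Hc Happrox]].
  assert (Hkr : 0 < INR k) by (apply lt_0_INR; lia).
  exists (fun x => c x / w x). split.
  - intros th Hth. eapply Rle_trans; [apply Happrox, Hth|].
    replace (2 * (theta_star * (Zfun w t0 / (t0 - theta_star)) + Zfun w t0) * theta_star
      / INR k / w 0%nat) with (E / INR k) by (unfold E, Zt; field; lra).
    apply Rmult_le_compat_r; [apply Rlt_le, Rinv_0_lt_compat |]; lra.
  - intros x Hx. eapply Rle_trans; [apply (Rabs_div_w_le w k x); auto|].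
    pose proof (maxinv_ge0 w k). pose proof (coef_bound_le_pow G K r k HG HK Hr Hk) as HC.
    fold C0 in HC. unfold G, K, r, Zt in HC.
    assert (C0 ^ k <= (C0 + E) ^ k) by (apply pow_incr; lra).
    apply Rmult_le_compat_r; lra.
Qed.
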